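(* Let $P:\mathcal C^{op}\to\mathbf{Pos}$ be a doctrine and $\mathsf K=(K,\kappa,\mu,\nu)$ a comonad on $P$ in $\mathbf{IdxPos}$. Let $\mathcal C_K$, $P^{\mathsf K}$ and $(U,u):P^{\mathsf K}\to P$ be as follows: $\mathcal C_K$ is the category of $K$-coalgebras, $P^{\mathsf K}(C,c)=\{\alpha\in PC\mid\alpha\le P(c)(\kappa_C\alpha)\}$ with reindexing by restriction of that of $P$, $U$ is the forgetful functor and $u$ the family of inclusions $P^{\mathsf K}(C,c)\hookrightarrow PC$. Let $\hat K:\mathcal C\to\mathcal C_K$ be the cofree coalgebra functor $\hat KX=(KX,\mu_X)$, and let $\eta^{\mathsf K}:\mathrm{Id}_{\mathcal C_K}\Rightarrow\hat KU$ be given by $\eta^{\mathsf K}_{(X,c)}=c$. Then $\kappa$ (with components $\kappa_X:PX\to P^{\mathsf K}(KX,\mu_X)$) defines a 1-arrow $(\hat K,\kappa):P\to P^{\mathsf K}$, and $(U,u)\dashv(\hat K,\kappa)$ is an adjunction in $\mathbf{IdxPos}$ with unit $\eta^{\mathsf K}$ and counit $\nu$.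
   Context: A doctrine is a functor $P:\mathcal C^{op}\to\mathbf{Pos}$; for $t:X\to Y$, $P(t):PY\to PX$ is reindexing. In the 2-category $\mathbf{IdxPos}$, a 1-arrow $(F,f):P\to Q$ (with $P:\mathcal C^{op}\to\mathbf{Pos}$, $Q:\mathcal D^{op}\to\mathbf{Pos}$) is a functor $F:\mathcal C\to\mathcal D$ with a natural transformation $f:P\Rightarrow Q\circ F^{op}$; a 2-arrow $\theta:(F,f)\Rightarrow(F',f')$ is a natural transformation $\theta:F\Rightarrow F'$ with $f_X(\alpha)\le Q(\theta_X)(f'_X(\alpha))$ for all $X,\alpha$; composition of $(G,g)$ then $(F,f)$ is $(FG,(fG^{op})\cdot g)$ (components $f_{GX}\circ g_X$), and 2-arrows compose as natural transformations. A comonad on $P$ in $\mathbf{IdxPos}$ amounts to $(K,\kappa,\mu,\nu)$ where $(K,\mu,\nu)$ is a comonad on $\mathcal C$, $\kappa:P\Rightarrow PK^{op}$ is natural, and for all $X$, $\kappa_X\le P(\mu_X)\circ\kappa_{KX}\circ\kappa_X$ and $\kappa_X\le P(\nu_X)$ pointwise. Adjunctions in $\mathbf{IdxPos}$ are in the usual 2-categorical sense. $K$-coalgebras are pairs $(C,c:C\to KC)$ with $\nu_C c=\mathrm{id}$, $\mu_C c=Kc\circ c$. *)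

From Stdlib Require Import ProofIrrelevance.


Record Category := {
  Ob : Type;
  Hom : Ob -> Ob -> Type;
  idm : forall X, Hom X X;
  comp : forall {X Y Z}, Hom Y Z -> Hom X Y -> Hom X Z;
  comp_idl : forall X Y (f : Hom X Y), comp (idm Y) f = f;
  comp_idr : forall X Y (f : Hom X Y), comp f (idm X) = f;
  comp_assoc : forall X Y Z W (h : Hom Z W) (g : Hom Y Z) (f : Hom X Y),
      comp h (comp g f) = comp (comp h g) f }.
Arguments Hom {c} X Y.
Arguments idm {c} X.
Arguments comp {c X Y Z} g f.

Record Functor (C D : Category) := {
  fob : Ob C -> Ob D;
  fmap : forall {X Y}, Hom X Y -> Hom (fob X) (fob Y);
  fmap_id : forall X, fmap (idm X) = idm (fob X);
  fmap_comp : forall X Y Z (g : Hom Y Z) (f : Hom X Y),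
      fmap (comp g f) = comp (fmap g) (fmap f) }.
Arguments fob {C D} F X : rename.
Arguments fmap {C D} F {X Y} f : rename.

Record Doctrine (C : Category) := {
  dob : Ob C -> Type;
  dle : forall {X}, dob X -> dob X -> Prop;
  dle_refl : forall X (a : dob X), dle a a;
  dle_trans : forall X (a b c : dob X), dle a b -> dle b c -> dle a c;
  dle_antisym : forall X (a b : dob X), dle a b -> dle b a -> a = b;
  reix : forall {X Y}, Hom X Y -> dob Y -> dob X;
  reix_mono : forall X Y (t : Hom X Y) (a b : dob Y), dle a b -> dle (reix t a) (reix t b);
  reix_id : forall X (a : dob X), reix (idm X) a = a;
  reix_comp : forall X Y Z (t : Hom X Y) (s : Hom Y Z) (a : dob Z),
      reix (comp s t) a = reix t (reix s a) }.
Arguments dob {C} P X : rename.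
Arguments dle {C} P {X} a b : rename.
Arguments reix {C} P {X Y} t a : rename.

Record OneArrow {C D : Category} (P : Doctrine C) (Q : Doctrine D)
       (F : Functor C D) := {
  oa : forall X, dob P X -> dob Q (fob F X);
  oa_mono : forall X a b, dle P a b -> dle Q (oa X a) (oa X b);
  oa_nat : forall X Y (t : Hom X Y) b,
      oa X (reix P t b) = reix Q (fmap F t) (oa Y b) }.
Arguments oa {C D P Q F} o X a : rename.

(* Unfolded: eta and eps are natural transformations, they are 2-arrows
   eta : (Id,id) => (GF, (g F^op).f) and eps : (FG, (f G^op).g) => (Id,id),
   and the triangle identities hold (2-cells compose as nat. transf.). *)
Definition IsAdjunction {C D : Category} {P : Doctrine C} {Q : Doctrine D}
    {F : Functor C D} {G : Functor D C}
    (f : OneArrow P Q F) (g : OneArrow Q P G)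
    (eta : forall X : Ob C, Hom X (fob G (fob F X)))
    (eps : forall Y : Ob D, Hom (fob F (fob G Y)) Y) : Prop :=
  (forall X X' (t : Hom X X'),
      comp (fmap G (fmap F t)) (eta X) = comp (eta X') t) /\
  (forall Y Y' (s : Hom Y Y'),
      comp s (eps Y) = comp (eps Y') (fmap F (fmap G s))) /\
  (forall X (a : dob P X),
      dle P a (reix P (eta X) (oa g (fob F X) (oa f X a)))) /\
  (forall Y (b : dob Q Y),
      dle Q (oa f (fob G Y) (oa g Y b)) (reix Q (eps Y) b)) /\
  (forall X, comp (eps (fob F X)) (fmap F (eta X)) = idm (fob F X)) /\
  (forall Y, comp (fmap G (eps Y)) (eta (fob G Y)) = idm (fob G Y)).

Record Comonad (C : Category) := {
  cK : Functor C C;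
  cmu : forall X, Hom (fob cK X) (fob cK (fob cK X));
  cnu : forall X, Hom (fob cK X) X;
  cmu_nat : forall X Y (f : Hom X Y),
      comp (fmap cK (fmap cK f)) (cmu X) = comp (cmu Y) (fmap cK f);
  cnu_nat : forall X Y (f : Hom X Y),
      comp f (cnu X) = comp (cnu Y) (fmap cK f);
  c_counitl : forall X, comp (cnu (fob cK X)) (cmu X) = idm (fob cK X);
  c_counitr : forall X, comp (fmap cK (cnu X)) (cmu X) = idm (fob cK X);
  c_coassoc : forall X,
      comp (cmu (fob cK X)) (cmu X) = comp (fmap cK (cmu X)) (cmu X) }.
Arguments cK {C} c : rename.
Arguments cmu {C} c X : rename.
Arguments cnu {C} c X : rename.

Record DocComonad {C : Category} (P : Doctrine C) := {
  dcm : Comonad C;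
  kappa : forall X, dob P X -> dob P (fob (cK dcm) X);
  kappa_mono : forall X a b, dle P a b -> dle P (kappa X a) (kappa X b);
  kappa_nat : forall X Y (t : Hom X Y) b,
      kappa X (reix P t b) = reix P (fmap (cK dcm) t) (kappa Y b);
  kappa_mu : forall X a,
      dle P (kappa X a)
        (reix P (cmu dcm X) (kappa (fob (cK dcm) X) (kappa X a)));
  kappa_nu : forall X a, dle P (kappa X a) (reix P (cnu dcm X) a) }.
Arguments dcm {C P} k : rename.
Arguments kappa {C P} k X a : rename.

Lemma sig_eq_ext {A : Type} {Pr : A -> Prop} (x y : sig Pr) :
  proj1_sig x = proj1_sig y -> x = y.
Proof.
  destruct x as [x hx], y as [y hy]; simpl; intros ->.
  f_equal; apply proof_irrelevance.
Qed.

Section EilenbergMoore.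
Variables (C : Category) (P : Doctrine C) (KK : DocComonad P).
Let K := cK (dcm KK).
Let mu := cmu (dcm KK).
Let nu := cnu (dcm KK).

Record Coalg := {
  ca : Ob C;
  cs : Hom ca (fob K ca);
  cs_counit : comp (nu ca) cs = idm ca;
  cs_coassoc : comp (mu ca) cs = comp (fmap K cs) cs }.

Definition CoalgHom (A B : Coalg) : Type :=
  { f : Hom (ca A) (ca B) | comp (cs B) f = comp (fmap K f) (cs A) }.

Definition coalg_id (A : Coalg) : CoalgHom A A.
Proof.
  exists (idm (ca A)).
  rewrite comp_idr, (@fmap_id _ _ K), comp_idl; reflexivity.
Defined.

Definition coalg_comp (A B D : Coalg) (g : CoalgHom B D) (f : CoalgHom A B) :
  CoalgHom A D.
Proof.
  exists (comp (proj1_sig g) (proj1_sig f)).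
  destruct g as [g hg], f as [f hf]; simpl.
  rewrite comp_assoc, hg, <- comp_assoc, hf, comp_assoc, (@fmap_comp _ _ K).
  reflexivity.
Defined.

Definition CK : Category.
Proof.
  refine {| Ob := Coalg; Hom := CoalgHom; idm := coalg_id;
            comp := coalg_comp |}.
  - intros; apply sig_eq_ext; simpl; apply comp_idl.
  - intros; apply sig_eq_ext; simpl; apply comp_idr.
  - intros; apply sig_eq_ext; simpl; apply comp_assoc.
Defined.

Definition PKob (A : Coalg) : Type :=
  { a : dob P (ca A) | dle P a (reix P (cs A) (kappa KK (ca A) a)) }.

Definition PKreix (A B : Coalg) (f : CoalgHom A B) (b : PKob B) : PKob A.
Proof.
  exists (reix P (proj1_sig f) (proj1_sig b)).
  destruct f as [f hf], b as [b hb]; simpl.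
  eapply dle_trans.
  - apply reix_mono; exact hb.
  - rewrite kappa_nat, <- !reix_comp.
    fold K. rewrite <- hf. apply dle_refl.
Defined.

Definition PK : Doctrine CK.
Proof.
  refine {| dob := PKob : Ob CK -> Type;
            dle := fun A (a b : PKob A) => dle P (proj1_sig a) (proj1_sig b);
            reix := PKreix |}.
  - intros; apply dle_refl.
  - intros X a b c; apply dle_trans.
  - intros X a b h1 h2; apply sig_eq_ext; eapply dle_antisym; eauto.
  - intros X Y t a b h; simpl; apply reix_mono; exact h.
  - intros X a; apply sig_eq_ext; simpl; apply reix_id.
  - intros X Y Z t s a; apply sig_eq_ext; simpl; apply reix_comp.
Defined.

Definition UK : Functor CK C.
Proof.
  refine {| fob := (ca : Ob CK -> Ob C);
            fmap := fun A B (f : @Hom CK A B) => proj1_sig f |}.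
  - reflexivity.
  - reflexivity.
Defined.

Definition uK : OneArrow PK P UK.
Proof.
  refine {| oa := fun (A : Ob CK) (a : dob PK A) => (proj1_sig a : dob P (fob UK A)) |}.
  - intros X a b h; exact h.
  - reflexivity.
Defined.

Definition cofree (X : Ob C) : Coalg :=
  {| ca := fob K X; cs := mu X;
     cs_counit := @c_counitl _ (dcm KK) X;
     cs_coassoc := @c_coassoc _ (dcm KK) X |}.

Definition cofree_map (X Y : Ob C) (f : Hom X Y) : CoalgHom (cofree X) (cofree Y).
Proof.
  exists (fmap K f); simpl.
  symmetry; apply (@cmu_nat _ (dcm KK)).
Defined.

Definition Khat : Functor C CK.
Proof.
  refine {| fob := (cofree : Ob C -> Ob CK);
            fmap := cofree_map |}.
  - intros; apply sig_eq_ext; simpl; apply (@fmap_id _ _ K).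
  - intros; apply sig_eq_ext; simpl; apply (@fmap_comp _ _ K).
Defined.

Definition etaK (A : Ob CK) : Hom A (fob Khat (fob UK A)) :=
  exist _ (cs A) (cs_coassoc A).

Definition nuK (X : Ob C) : Hom (fob UK (fob Khat X)) X := nu X.

End EilenbergMoore.
Arguments PK {C P} KK.
Arguments Khat {C P} KK.
Arguments UK {C P} KK.
Arguments uK {C P} KK.
Arguments CK {C P} KK.


(* The comonad law [kappa <= mu^* (kappa kappa)] says exactly that [kappa_X a]
   lies in [P^K(KX, mu_X)], so [kappa] is a 1-arrow into [P^K].  The unit
   2-cell inequality [a <= c^*(kappa a)] is the defining condition of
   [P^K(C, c)], and the counit 2-cell inequality is [kappa <= nu^*].  The
   triangle identities are the counit law [nu o c = id] of a coalgebra and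
   the comonad law [K nu o mu = id]. *)

Section CofreeAdjunction.
Variables (C : Category) (P : Doctrine C) (KK : DocComonad P).

Definition kappaK_ob (X : Ob C) (a : dob P X) : dob (PK KK) (fob (Khat KK) X) :=
  exist _ (kappa KK X a) (kappa_mu _ KK X a).

Definition kappaK : OneArrow P (PK KK) (Khat KK).
Proof.
  refine {| oa := kappaK_ob |}.
  - intros X a b h; apply kappa_mono; exact h.
  - intros X Y t b; apply sig_eq_ext; apply kappa_nat.
Defined.

Lemma etaK_natural (A A' : Ob (CK KK)) (t : Hom A A') :
  comp (fmap (Khat KK) (fmap (UK KK) t)) (etaK C P KK A)
  = comp (etaK C P KK A') t.
Proof.
  apply sig_eq_ext; destruct t as [t ht]; symmetry; exact ht.
Qed.

Lemma nuK_natural (Y Y' : Ob C) (s : Hom Y Y') :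
  comp s (nuK C P KK Y)
  = comp (nuK C P KK Y') (fmap (UK KK) (fmap (Khat KK) s)).
Proof. apply (cnu_nat _ (dcm KK)). Qed.

Lemma le_reix_etaK_kappaK (A : Ob (CK KK)) (a : dob (PK KK) A) :
  dle (PK KK) a
    (reix (PK KK) (etaK C P KK A) (oa kappaK (fob (UK KK) A) (oa (uK KK) A a))).
Proof. exact (proj2_sig a). Qed.

Lemma kappaK_le_reix_nuK (Y : Ob C) (b : dob P Y) :
  dle P (oa (uK KK) (fob (Khat KK) Y) (oa kappaK Y b)) (reix P (nuK C P KK Y) b).
Proof. apply kappa_nu. Qed.

Lemma nuK_etaK (A : Ob (CK KK)) :
  comp (nuK C P KK (fob (UK KK) A)) (fmap (UK KK) (etaK C P KK A))
  = idm (fob (UK KK) A).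
Proof. apply cs_counit. Qed.

Lemma Khat_nuK_etaK (Y : Ob C) :
  comp (fmap (Khat KK) (nuK C P KK Y)) (etaK C P KK (fob (Khat KK) Y))
  = idm (fob (Khat KK) Y).
Proof. apply sig_eq_ext; apply (c_counitr _ (dcm KK)). Qed.

Lemma uK_kappaK_adjunction :
  IsAdjunction (uK KK) kappaK (etaK C P KK) (nuK C P KK).
Proof.
  repeat split.
  - exact etaK_natural.
  - exact nuK_natural.
  - exact le_reix_etaK_kappaK.
  - exact kappaK_le_reix_nuK.
  - exact nuK_etaK.
  - exact Khat_nuK_etaK.
Qed.

End CofreeAdjunction.

Theorem corollary6p5 (C : Category) (P : Doctrine C) (KK : DocComonad P) :
  exists k : OneArrow P (PK KK) (Khat KK),
    (forall (X : Ob C) (a : dob P X), proj1_sig (oa k X a) = kappa KK X a) /\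
    IsAdjunction (uK KK) k (@etaK C P KK) (@nuK C P KK).
Proof.
  exists (kappaK C P KK); split.
  - reflexivity.
  - apply uK_kappaK_adjunction.
Qed.
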